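(* Let $f\colon\mathbb{R}^n\to\mathbb{R}$ be $f(x)=x^\top Ax+b^\top x+c$ with $A\in\mathbb{R}^{n\times n}$ symmetric, $b\in\mathbb{R}^n$, $c\in\mathbb{R}$. Let $C\colon[0,\infty)\to\mathbb{R}^{n\times n}$ solve $\dot C(t)=-2C(t)AC(t)$, with $C(0)$ invertible, and let $m(0)\in\mathbb{R}^n$. Then $m\colon[0,\infty)\to\mathbb{R}^n$ given by $$m(t)=C(t)\big(C(0)^{-1}m(0)-tb\big)$$ has initial value $m(0)$ and solves $\dot m(t)=-2C(t)Am(t)-C(t)b$.
   Context: The equations $\dot m=-2CAm-Cb$, $\dot C=-2CAC$ are the approximately Gaussian replicator flow (AGRF) equations for this quadratic $f$, i.e., the ODEs $\dot m_i=m_i\mathbb{E}[f(x)]-\mathbb{E}[x_if(x)]$, $\dot C_{ij}=(C_{ij}-m_im_j)\mathbb{E}[f(x)]-\mathbb{E}[x_ix_jf(x)]+m_i\mathbb{E}[x_jf(x)]+m_j\mathbb{E}[x_if(x)]$ with $x\sim\mathcal{N}(m(t),C(t))$, specialized to quadratic $f$. *)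

From HB Require Import structures.
From mathcomp Require Import all_boot all_order all_algebra.
From mathcomp Require Import all_classical all_reals all_analysis.
Set Implicit Arguments. Unset Strict Implicit. Unset Printing Implicit Defensive.
Import Order.TTheory GRing.Theory Num.Theory.
Import numFieldNormedType.Exports.
Local Open Scope classical_set_scope.
Local Open Scope ring_scope.

(* [g' t] is the derivative of [g] at [t], for every t in [0, oo),
   the derivative being taken within the domain [0, oo)
   (so at t = 0 it is the one-sided right derivative). *)
Definition deriv_on_nonneg (R : realType) (g g' : R -> R) : Prop :=
  forall t : R, 0 <= t ->
    (fun s => (g s - g t) / (s - t)) @ within [set s | 0 <= s /\ s != t] (nbhs t)
      --> g' t.

Definition mderiv_on_nonneg (R : realType) (p q : nat)
    (F F' : R -> 'M[R]_(p, q)) : Prop :=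
  forall (i : 'I_p) (j : 'I_q),
    deriv_on_nonneg (fun s => F s i j) (fun s => F' s i j).

Definition quad_f (R : realType) (n : nat) (A : 'M[R]_n) (b : 'cV[R]_n) (c : R)
    (x : 'cV[R]_n) : R :=
  ((x^T *m A *m x) 0 0) + ((b^T *m x) 0 0) + c.

(* m t = C t *m v t with v t = C 0^-1 m0 - t b affine, so by the product rule
   m' = C' v + C v' = -2 C A C v - C b = -2 C A m - C b; at t = 0 the factor
   C 0 cancels C 0^-1. *)
From HB Require Import structures.
From mathcomp Require Import all_boot all_order all_algebra.
From mathcomp Require Import all_classical all_reals all_analysis.
From mathcomp Require Import ring.
Import Order.TTheory GRing.Theory Num.Theory.
Import numFieldNormedType.Exports.
Local Open Scope classical_set_scope.
Local Open Scope ring_scope.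

Section DerivOnNonneg.
Context {R : realType}.
Local Notation at_nonneg t := (within [set s : R | 0 <= s /\ s != t] (nbhs t)).

Lemma at_nonneg_neq (t : R) : \forall s \near at_nonneg t, s != t.
Proof. by apply: filterS (near_withinT _ _) => s []. Qed.

Lemma deriv_on_nonneg_cvg {h h' : R -> R} {t : R} :
  deriv_on_nonneg h h' -> 0 <= t -> h s @[s --> at_nonneg t] --> h t.
Proof.
move=> dh t_ge0.
have incr_cvg0 : (fun s => s - t) @ at_nonneg t --> (0 : R).
  by rewrite -(subrr t); apply: cvgB; [exact: cvg_within | exact: cvg_cst].
have : h t + (h s - h t) / (s - t) * (s - t) @[s --> at_nonneg t]
         --> h t + h' t * 0.
  by apply: cvgD; [exact: cvg_cst | exact: cvgM (dh t t_ge0) incr_cvg0].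
rewrite mulr0 addr0 => lim; apply: cvg_trans _ lim.
apply: near_eq_cvg; near=> s => /=.
have st : s - t != 0 by rewrite subr_eq0; near: s; exact: at_nonneg_neq.
by rewrite mulfVK // addrC subrK.
Unshelve. all: by end_near.
Qed.

Lemma deriv_on_nonneg_affine (a b : R) :
  deriv_on_nonneg (fun s => a + s * b) (fun=> b).
Proof.
move=> t _; apply: cvg_trans _ (cvg_cst (F := at_nonneg t) b).
apply: near_eq_cvg; near=> s => /=.
have st : s - t != 0 by rewrite subr_eq0; near: s; exact: at_nonneg_neq.
by rewrite opprD addrACA subrr add0r -mulrBl mulrAC divff // mul1r.
Unshelve. all: by end_near.
Qed.

Lemma deriv_on_nonnegM {g h g' h' : R -> R} :
  deriv_on_nonneg g g' -> deriv_on_nonneg h h' ->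
  deriv_on_nonneg (fun s => g s * h s) (fun s => g' s * h s + g s * h' s).
Proof.
move=> dg dh t t_ge0.
have : (g s - g t) / (s - t) * h s + g t * ((h s - h t) / (s - t))
         @[s --> at_nonneg t] --> g' t * h t + g t * h' t.
  apply: cvgD; first exact: cvgM (dg t t_ge0) (deriv_on_nonneg_cvg dh t_ge0).
  exact: cvgM (cvg_cst _) (dh t t_ge0).
move=> lim; apply: cvg_trans _ lim; apply: near_eq_cvg; near=> s => /=.
by rewrite mulrAC mulrA -mulrDl; congr (_ / _); ring.
Unshelve. all: by end_near.
Qed.

Lemma deriv_on_nonneg_sum {I : Type} (r : seq I) {F F' : I -> R -> R} :
  (forall k, deriv_on_nonneg (F k) (F' k)) ->
  deriv_on_nonneg (fun s => \sum_(k <- r) F k s)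
                  (fun s => \sum_(k <- r) F' k s).
Proof.
move=> dF t t_ge0.
have : \sum_(k <- r) (F k s - F k t) / (s - t) @[s --> at_nonneg t]
         --> \sum_(k <- r) F' k t.
  by apply: cvg_big => //; [exact: add_continuous | move=> k _; exact: dF].
move=> lim; apply: cvg_trans _ lim; apply: near_eq_cvg; near=> s => /=.
by rewrite -sumrB mulr_suml.
Unshelve. all: by end_near.
Qed.

End DerivOnNonneg.

Section MatrixDerivOnNonneg.
Context {R : realType}.

Lemma mderiv_on_nonneg_mul {p q r : nat} {F F' : R -> 'M[R]_(p, q)}
    {G G' : R -> 'M[R]_(q, r)} :
  mderiv_on_nonneg F F' -> mderiv_on_nonneg G G' ->
  mderiv_on_nonneg (fun s => F s *m G s) (fun s => F' s *m G s + F s *m G' s).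
Proof.
move=> dF dG i j.
have -> : (fun s => (F s *m G s) i j) = (fun s => \sum_k F s i k * G s k j).
  by apply: funext => s; rewrite mxE.
have -> : (fun s => (F' s *m G s + F s *m G' s) i j)
    = (fun s => \sum_k (F' s i k * G s k j + F s i k * G' s k j)).
  by apply: funext => s; rewrite !mxE big_split.
by apply: deriv_on_nonneg_sum => k; exact: deriv_on_nonnegM.
Qed.

Lemma mderiv_on_nonneg_affine {p q : nat} (V B : 'M[R]_(p, q)) :
  mderiv_on_nonneg (fun s => V - s *: B) (fun=> - B).
Proof.
move=> i j.
have -> : (fun s => (V - s *: B) i j) = (fun s => V i j + s * - B i j).
  by apply: funext => s; rewrite !mxE mulrN.
have -> : (fun=> (- B) i j) = (fun=> - B i j) :> (R -> R) by rewrite mxE.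
exact: deriv_on_nonneg_affine.
Qed.

End MatrixDerivOnNonneg.

Theorem proposition4 (R : realType) (n : nat) (A : 'M[R]_n) (b : 'cV[R]_n)
    (c : R) (C : R -> 'M[R]_n) (m0 : 'cV[R]_n) :
  A^T = A ->
  C 0 \in unitmx ->
  mderiv_on_nonneg C (fun t => - 2 *: (C t *m A *m C t)) ->
  let m := fun t : R => C t *m (invmx (C 0) *m m0 - t *: b) in
  m 0 = m0 /\
  mderiv_on_nonneg m (fun t => - 2 *: (C t *m A *m m t) - C t *m b).
Proof.
move=> _ C0_unit dC m; split.
  by rewrite /m scale0r subr0 mulmxA mulmxV // mul1mx.
have -> : (fun t => - 2 *: (C t *m A *m m t) - C t *m b) =
    (fun t => - 2 *: (C t *m A *m C t) *m (invmx (C 0) *m m0 - t *: b)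
              + C t *m - b).
  by apply: funext => t; rewrite /m -scalemxAl !mulmxA mulmxN.
exact: mderiv_on_nonneg_mul dC
         (mderiv_on_nonneg_affine (invmx (C 0) *m m0) b).
Qed.
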